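(* Let $n$ be a nonnegative integer and define \[ \widetilde{R}_n(a,c)=(1-a)_n(a)_n\,{}_3F_2\!\left(\left.{-n,a-c-n,c \atop \frac{a-n}{2},\frac{1+a-n}{2}}\right| \frac{1}{4}\right). \] Then, whenever all expressions are defined, \[ {}_3F_2\!\left(\left.{-n,a-c-n,c \atop \frac{a-n}{2},\frac{1+a-n}{2}}\right| \frac{1}{4}\right) =\frac{(1+c-a)_n(a-c)_n}{(1-a)_n(a)_n}\,{}_3F_2\!\left(\left.{-n,1-a-n,c \atop \frac{1+c-a-n}{2},\frac{2+c-a-n}{2}}\right| \frac{1}{4}\right), \] i.e. $\widetilde{R}_n(a,c)=\widetilde{R}_n(1+c-a,c)$. The group of transformations of $(a,c)$ generated by $(a,c)\mapsto(a,a-c-n)$ and $(a,c)\mapsto(1+c-a,c)$ is isomorphic to $S_3$ and yields the invariances $\widetilde{R}_n(a,c)=\widetilde{R}_n(a,c)=\widetilde{R}_n(a,a-c-n)=\widetilde{R}_n(1+c-a,c)=\widetilde{R}_n(1+c-a,1-a-n)=\widetilde{R}_n(1-c-n,a-c-n)=\widetilde{R}_n(1-c-n,1-a-n)$. Moreover, $\widetilde{V}_n(x,y,z)=\widetilde{R}_n\!\left(\frac{2+2x-y-z-n}{3},\frac{1+x+y-2z-2n}{3}\right)$ is invariant under all six permutations of $x,y,z$.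
   Context: For $a\in\mathbb{C}$, $(a)_0=1$ and $(a)_k=a(a+1)\cdots(a+k-1)$ for $k\ge1$. The hypergeometric series is ${}_rF_s\!\left(\left.{\alpha_1,\ldots,\alpha_r\atop \beta_1,\ldots,\beta_s}\right|z\right)=\sum_{k\ge0}\frac{(\alpha_1)_k\cdots(\alpha_r)_k}{k!(\beta_1)_k\cdots(\beta_s)_k}z^k$, with no lower parameter zero or a negative integer; when an upper parameter is $-n$ it is a finite sum over $0\le k\le n$. *)

From HB Require Import structures.
From mathcomp Require Import all_boot all_order all_algebra.
From mathcomp Require Import complex.
From mathcomp Require Import reals.
Set Implicit Arguments. Unset Strict Implicit. Unset Printing Implicit Defensive.
Import Order.TTheory GRing.Theory Num.Theory.
Local Open Scope ring_scope.
Local Open Scope complex_scope.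

Section Hyper.
Variable F : fieldType.

Definition poch (a : F) (k : nat) : F := \prod_(i < k) (a + i%:R).

Definition lower_ok (b : F) : Prop := forall m : nat, b <> - m%:R.

(* When -n is among the upper
   parameters (the only use below), all terms with k > n vanish, so this is
   exactly the series rFs(us; ls | z) of the paper. *)
Definition hypF (n : nat) (us ls : seq F) (z : F) : F :=
  \sum_(k < n.+1)
    (\prod_(u <- us) poch u k) / (k`!%:R * \prod_(l <- ls) poch l k) * z ^+ k.

Definition F32 (n : nat) (a c : F) : F :=
  hypF n [:: - n%:R; a - c - n%:R; c] [:: (a - n%:R) / 2; (1 + a - n%:R) / 2] (1/4).

Definition Rt (n : nat) (a c : F) : F := poch (1 - a) n * poch a n * F32 n a c.

Definition Rt_defined (n : nat) (a : F) : Prop :=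
  lower_ok ((a - n%:R) / 2) /\ lower_ok ((1 + a - n%:R) / 2).

Definition Vt (n : nat) (x y z : F) : F :=
  Rt n ((2 + 2 * x - y - z - n%:R) / 3) ((1 + x + y - 2 * z - 2 * n%:R) / 3).

Definition sig1 (n : nat) (p : F * F) : F * F := (p.1, p.1 - p.2 - n%:R).
Definition sig2 (n : nat) (p : F * F) : F * F := (1 + p.2 - p.1, p.2).
End Hyper.

(** Writing u = c, v = a - c - n, w = 1 - a - n (so that u + v + w = 1 - 2n),
    R~_n(a,c) equals, up to the sign (-1)^n, the sum
      G_n(u,v) = \sum_k (-1)^k C(n,k) (u)_k (v)_k (u+v+2k)_{2n-2k},
    and every stated invariance is a permutation of the triple (u, v, w).
    Symmetry of G_n in u and v is apparent.  For the exchange of v and w,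
    consider the linear form on polynomials of degree at most m sending X^i to
    (u)_i (v)_{m-i}.  G_n(u,v) is its value (for m = 2n) on (X^2 + X + 1)^n
    expanded as ((X+1)^2 - X)^n, by Chu-Vandermonde applied to each
    (X+1)^{2n-2k} X^k.  Chu-Vandermonde also shows that the form at (u, v)
    agrees with the form at (u, 1-m-u-v) composed with the substitution
    X^i Y^{m-i} -> X^i (-X-Y)^{m-i}, and this substitution fixes the binary
    form X^2 + XY + Y^2. *)

From HB Require Import structures.
From mathcomp Require Import all_boot all_order all_algebra.
From mathcomp Require Import complex.
From mathcomp Require Import reals.
From mathcomp Require Import ring zify.
Set Implicit Arguments. Unset Strict Implicit. Unset Printing Implicit Defensive.
Import Order.TTheory GRing.Theory Num.Theory.
Local Open Scope ring_scope.

Section Pochhammer.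
Variable F : fieldType.
Implicit Types (u v : F) (k : nat).

Lemma poch0 u : poch u 0 = 1.
Proof. by rewrite /poch big_ord0. Qed.

Lemma pochS u k : poch u k.+1 = poch u k * (u + k%:R).
Proof. by rewrite /poch big_ord_recr. Qed.

Lemma pochSl u k : poch u k.+1 = u * poch (u + 1) k.
Proof.
rewrite /poch big_ord_recl addr0; congr (_ * _); apply: eq_bigr => i _.
by rewrite lift0 -add1n natrD addrA.
Qed.

Lemma pochD u j k : poch u (j + k) = poch u j * poch (u + j%:R) k.
Proof.
elim: k => [|k IH]; first by rewrite addn0 poch0 mulr1.
by rewrite addnS !pochS IH natrD addrA mulrA.
Qed.

Lemma poch_refl v k : poch (1 - k%:R - v) k = (-1) ^+ k * poch v k.
Proof.
elim: k => [|k IH]; first by rewrite !poch0 mulr1.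
rewrite pochSl pochS exprS -natr1.
have -> : 1 - (k%:R + 1) - v + 1 = 1 - k%:R - v by ring.
by rewrite IH; ring.
Qed.

Lemma poch_oppn n k : poch (- n%:R : F) k = (-1) ^+ k * (n ^_ k)%:R.
Proof.
elim: k => [|k IH]; first by rewrite poch0 ffactn0 mulr1.
rewrite pochS IH ffactnSr natrM exprS.
have [le_kn | lt_nk] := leqP k n; first by rewrite natrB //; ring.
by rewrite ffact_small // !mul0r !mulr0 mul0r.
Qed.

Lemma poch_double (two_neq0 : (2 : F) != 0) v k :
  poch v (k.*2) = poch (v / 2) k * poch ((1 + v) / 2) k * 4 ^+ k.
Proof.
elim: k => [|k IH]; first by rewrite !poch0 !mulr1.
rewrite doubleS !pochS IH exprS -!natr1 -muln2 natrM.
by field.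
Qed.

Lemma poch_lower_neq0 v k : lower_ok v -> poch v k != 0.
Proof.
move=> v_ok; rewrite /poch prodf_seq_neq0; apply/allP => i _ /=.
by rewrite addr_eq0; apply/eqP; exact: v_ok.
Qed.

End Pochhammer.

Section Umbral.
Variable F : fieldType.
Implicit Types (u v : F) (p q : {poly F}).

Definition umbral m u v p : F :=
  \sum_(i < m.+1) p`_i * poch u i * poch v (m - i).

Lemma umbralD m u v p q : umbral m u v (p + q) = umbral m u v p + umbral m u v q.
Proof. by rewrite /umbral -big_split; apply: eq_bigr => i _; rewrite coefD !mulrDl. Qed.

Lemma umbralZ m u v c p : umbral m u v (c *: p) = c * umbral m u v p.
Proof. by rewrite /umbral mulr_sumr; apply: eq_bigr => i _; rewrite coefZ !mulrA. Qed.

Lemma umbral_sum m u v N (P : 'I_N -> {poly F}) :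
  umbral m u v (\sum_(j < N) P j) = \sum_(j < N) umbral m u v (P j).
Proof.
by rewrite /umbral exchange_big; apply: eq_bigr => i _; rewrite coef_sum !mulr_suml.
Qed.

Lemma umbralMX m u v p : umbral m.+1 u v (p * 'X) = u * umbral m (u + 1) v p.
Proof.
rewrite /umbral big_ord_recl coefMX /= !mul0r add0r mulr_sumr.
by apply: eq_bigr => i _; rewrite coefMX /= pochSl subSS; ring.
Qed.

Lemma umbral_lift m u v p :
  (size p <= m.+1)%N -> umbral m.+1 u v p = v * umbral m u (v + 1) p.
Proof.
move=> size_p; rewrite /umbral big_ord_recr /= nth_default // !mul0r addr0 mulr_sumr.
apply: eq_bigr => i _ /=; have le_im : (i <= m)%N := ltn_ord i.
by rewrite subSn // pochSl mulrCA.
Qed.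

Lemma umbralMXn j k u v p :
  umbral (j + k) u v (p * 'X^k) = poch u k * umbral j (u + k%:R) v p.
Proof.
elim: k u => [|k IH] u; first by rewrite addn0 mulr1 poch0 mul1r addr0.
by rewrite addnS exprSr mulrA umbralMX IH pochSl -natr1 -addrA [1 + _]addrC mulrA.
Qed.

Lemma umbral_liftn j k u v p : (size p <= j.+1)%N ->
  umbral (j + k) u v p = poch v k * umbral j u (v + k%:R) p.
Proof.
move=> size_p; elim: k v => [|k IH] v; first by rewrite addn0 poch0 mul1r addr0.
rewrite addnS umbral_lift; last by rewrite (leq_trans size_p) // ltnS leq_addr.
by rewrite IH pochSl -natr1 -addrA [1 + _]addrC mulrA.
Qed.

Lemma size_X1n m : (size (('X + 1 : {poly F}) ^+ m) <= m.+1)%N.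
Proof.
apply: leq_trans (size_poly_exp_leq _ _) _.
by rewrite -polyC1 size_XaddC mul1n.
Qed.

(* Chu-Vandermonde *)
Lemma umbral_X1n m u v : umbral m u v (('X + 1) ^+ m) = poch (u + v) m.
Proof.
elim: m u v => [|m IH] u v; first by rewrite /umbral big_ord1 expr0 coefC /= !poch0 !mulr1.
rewrite exprSr mulrDr mulr1 umbralD umbralMX umbral_lift ?size_X1n // !IH pochSl.
by rewrite addrAC addrA -mulrDl.
Qed.

Lemma umbral_X1nXn j k u v :
  umbral (j + k + k) u v (('X + 1) ^+ j * 'X^k) =
  poch u k * poch v k * poch (u + v + (k.*2)%:R) j.
Proof.
rewrite umbralMXn umbral_liftn ?size_X1n // umbral_X1n -addnn natrD.
by rewrite mulrA; congr (_ * poch _ _); ring.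
Qed.

Definition reflp m p : {poly F} :=
  \sum_(i < m.+1) p`_i *: ('X^i * (- ('X + 1)) ^+ (m - i)).

Lemma umbral_reflXn j i u v :
  umbral (j + i) u (1 - (j + i)%:R - u - v) ('X^i * (- ('X + 1)) ^+ j) =
  poch u i * poch v j.
Proof.
rewrite -scaleN1r exprZn -scalerAr umbralZ [X in umbral _ _ _ X]mulrC umbralMXn umbral_X1n.
have -> : u + i%:R + (1 - (j + i)%:R - u - v) = 1 - j%:R - v by rewrite natrD; ring.
by rewrite poch_refl mulrCA signrMK.
Qed.

Lemma umbral_refl m u v p : umbral m u v p = umbral m u (1 - m%:R - u - v) (reflp m p).
Proof.
rewrite /reflp umbral_sum; apply: eq_bigr => i _.
have le_im : (i <= m)%N by rewrite -ltnS.
by rewrite umbralZ -mulrA -(umbral_reflXn (m - i)) subnK.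
Qed.

Lemma reflpD m p q : reflp m (p + q) = reflp m p + reflp m q.
Proof. by rewrite /reflp -big_split; apply: eq_bigr => i _; rewrite coefD scalerDl. Qed.

Lemma reflpMX m p : reflp m.+1 (p * 'X) = 'X * reflp m p.
Proof.
rewrite /reflp big_ord_recl coefMX /= scale0r add0r mulr_sumr.
by apply: eq_bigr => i _; rewrite coefMX /= subSS exprS -scalerAr mulrA.
Qed.

Lemma reflp_lift m p : (size p <= m.+1)%N -> reflp m.+1 p = - ('X + 1) * reflp m p.
Proof.
move=> size_p; rewrite /reflp big_ord_recr /= nth_default // scale0r addr0 mulr_sumr.
apply: eq_bigr => i _ /=; have le_im : (i <= m)%N := ltn_ord i.
by rewrite subSn // exprS -scalerAr mulrCA.
Qed.

(* X^2 + X + 1, in the shape whose binomial expansion gives [Gsum] *)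
Definition cyclo3 : {poly F} := ('X + 1) ^+ 2 - 'X.

Lemma size_cyclo3n n : (size (cyclo3 ^+ n) <= (n.*2).+1)%N.
Proof.
apply: leq_trans (size_poly_exp_leq _ _) _.
have size_cyclo3 : (size cyclo3 <= 3)%N.
  by rewrite (leq_trans (size_polyD _ _)) // geq_max size_X1n size_polyN size_polyX.
rewrite ltnS -muln2 mulnC leq_mul2l; apply/orP; right.
by case: (size cyclo3) size_cyclo3 => [|[|[|[|]]]].
Qed.

Lemma reflp_cyclo3n n : reflp (n.*2) (cyclo3 ^+ n) = cyclo3 ^+ n.
Proof.
elim: n => [|n IH]; first by rewrite /reflp big_ord1 coefC /= scale1r mulr1.
have size_n := size_cyclo3n n; have size_n1 := leq_trans size_n (leqnSn _).
have expand : cyclo3 ^+ n.+1 = cyclo3 ^+ n * 'X * 'X + cyclo3 ^+ n * 'X + cyclo3 ^+ n.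
  by rewrite exprSr /cyclo3; ring.
by rewrite {1}expand doubleS !reflpD !reflpMX !reflp_lift // IH expand; ring.
Qed.

Definition Gsum n u v : F :=
  \sum_(k < n.+1) (-1) ^+ k * 'C(n, k)%:R * poch u k * poch v k
     * poch (u + v + (k.*2)%:R) ((n - k).*2).

Lemma Gsum_umbral n u v : Gsum n u v = umbral (n.*2) u v (cyclo3 ^+ n).
Proof.
rewrite /cyclo3 exprDn umbral_sum; apply: eq_bigr => k _.
have le_kn : (k <= n)%N by rewrite -ltnS.
rewrite -scaleN1r exprZn -scalerAr -scaler_nat !umbralZ -exprM mul2n.
have -> : n.*2 = ((n - k).*2 + k + k)%N by rewrite -addnA addnn -doubleD subnK.
by rewrite umbral_X1nXn; ring.
Qed.

Lemma GsumC n u v : Gsum n u v = Gsum n v u.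
Proof. by apply: eq_bigr => k _; rewrite [v + u]addrC; ring. Qed.

Lemma Gsum_refl n u v : Gsum n u v = Gsum n u (1 - (n.*2)%:R - u - v).
Proof. by rewrite !Gsum_umbral umbral_refl reflp_cyclo3n. Qed.

End Umbral.

Section TransformationGroup.
Variable F : fieldType.
Variable n : nat.

Lemma sig1K : involutive (@sig1 F n).
Proof. by case=> a c; rewrite /sig1 /=; congr pair; ring. Qed.

Lemma sig2K : involutive (@sig2 F n).
Proof. by case=> a c; rewrite /sig2 /=; congr pair; ring. Qed.

Lemma sig1_sig2_cube (p : F * F) :
  sig1 n (sig2 n (sig1 n (sig2 n (sig1 n (sig2 n p))))) = p.
Proof. by case: p => a c; rewrite /sig1 /sig2 /=; congr pair; ring. Qed.

Lemma sig1_sig2_neq_id : exists p : F * F, sig1 n (sig2 n p) <> p.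
Proof.
exists (0, 0); rewrite /sig1 /sig2 /= => /(congr1 fst) /= /eqP.
by rewrite subr0 addr0 oner_eq0.
Qed.

End TransformationGroup.

Section Invariance.
Variable F : numFieldType.
Variable n : nat.
Implicit Types (a c x y z : F).

Lemma Rt_Gsum a c : Rt_defined n a -> Rt n a c = (-1) ^+ n * Gsum n c (a - c - n%:R).
Proof.
case=> ok1 ok2; rewrite /Rt /F32 /hypF /Gsum.
have -> : poch (1 - a) n = (-1) ^+ n * poch (a - n%:R) n.
  by rewrite -poch_refl; congr poch; ring.
have double_n : poch (a - n%:R) n * poch a n = poch (a - n%:R) (n.*2).
  by rewrite -addnn pochD subrK.
rewrite -[_ * _ * poch a n]mulrA double_n -mulrA !mulr_sumr; apply: eq_bigr => k _.
have le_kn : (k <= n)%N by rewrite -ltnS.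
rewrite !big_cons !big_nil !mulr1.
have -> : c + (a - c - n%:R) = a - n%:R by ring.
have -> : poch (a - n%:R) (n.*2) =
    poch (a - n%:R) (k.*2) * poch (a - n%:R + (k.*2)%:R) ((n - k).*2).
  by rewrite -pochD -doubleD subnKC.
rewrite poch_double ?pnatr_eq0 // addrA poch_oppn -bin_ffact natrM div1r exprVn.
have nz1 := poch_lower_neq0 k ok1; have nz2 := poch_lower_neq0 k ok2.
have nz_fact : (k`!%:R : F) != 0 by rewrite pnatr_eq0 -lt0n fact_gt0.
have nz4 : (4 : F) ^+ k != 0 by rewrite expf_neq0 // pnatr_eq0.
by field; rewrite nz1 nz2 nz_fact nz4.
Qed.

Lemma Rt_sig1 a c : Rt_defined n a -> Rt n a c = Rt n a (a - c - n%:R).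
Proof.
by move=> ok_a; rewrite !Rt_Gsum // GsumC; congr (_ * Gsum _ _ _); ring.
Qed.

Lemma Rt_sig2 a c : Rt_defined n a -> Rt_defined n (1 + c - a) ->
  Rt n a c = Rt n (1 + c - a) c.
Proof.
move=> ok_a ok_ca; rewrite !Rt_Gsum // Gsum_refl.
by congr (_ * Gsum _ _ _); rewrite -addnn natrD; ring.
Qed.

Lemma F32_transformation a c :
  Rt_defined n a -> Rt_defined n (1 + c - a) -> poch (1 - a) n * poch a n != 0 ->
  hypF n [:: - n%:R; a - c - n%:R; c] [:: (a - n%:R) / 2; (1 + a - n%:R) / 2] (1/4)
  = poch (1 + c - a) n * poch (a - c) n / (poch (1 - a) n * poch a n)
    * hypF n [:: - n%:R; 1 - a - n%:R; c]
        [:: (1 + c - a - n%:R) / 2; (2 + c - a - n%:R) / 2] (1/4).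
Proof.
move=> ok_a ok_ca nz; have := Rt_sig2 ok_a ok_ca; rewrite /Rt /F32.
have -> : (1 + (1 + c - a) - n%:R) / 2 = (2 + c - a - n%:R) / 2 by congr (_ / _); ring.
have -> : 1 + c - a - c - n%:R = 1 - a - n%:R by ring.
have -> : 1 - (1 + c - a) = a - c by ring.
move=> E; rewrite -[LHS](mulKf nz) E mulrA.
by rewrite [poch (a - c) n * _]mulrC [_^-1 * _]mulrC.
Qed.

Lemma Rt_invariances a c :
  Rt_defined n a -> Rt_defined n (1 + c - a) -> Rt_defined n (1 - c - n%:R) ->
  [/\ Rt n a c = Rt n a (a - c - n%:R),
      Rt n a c = Rt n (1 + c - a) c,
      Rt n a c = Rt n (1 + c - a) (1 - a - n%:R),
      Rt n a c = Rt n (1 - c - n%:R) (a - c - n%:R)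
    & Rt n a c = Rt n (1 - c - n%:R) (1 - a - n%:R)].
Proof.
move=> ok_a ok_ca ok_c.
have sig2_sig1 : Rt n a (a - c - n%:R) = Rt n (1 - c - n%:R) (a - c - n%:R).
  have e : 1 + (a - c - n%:R) - a = 1 - c - n%:R by ring.
  by rewrite (Rt_sig2 (c := a - c - n%:R) ok_a) ?e.
have sig1_sig2 : Rt n (1 + c - a) c = Rt n (1 + c - a) (1 - a - n%:R).
  by rewrite Rt_sig1 //; congr Rt; ring.
have sig1_sig2_sig1 :
    Rt n (1 - c - n%:R) (a - c - n%:R) = Rt n (1 - c - n%:R) (1 - a - n%:R).
  by rewrite Rt_sig1 //; congr Rt; ring.
split.
- exact: Rt_sig1.
- exact: Rt_sig2.
- by rewrite -sig1_sig2; exact: Rt_sig2.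
- by rewrite -sig2_sig1; exact: Rt_sig1.
- by rewrite -sig1_sig2_sig1 -sig2_sig1; exact: Rt_sig1.
Qed.

Lemma Vt_swap12 x y z :
  Rt_defined n ((2 + 2 * x - y - z - n%:R) / 3) ->
  Rt_defined n ((2 + 2 * y - x - z - n%:R) / 3) ->
  Vt n x y z = Vt n y x z.
Proof.
move=> ok_x ok_y.
have e : 1 + (1 + x + y - 2 * z - 2 * n%:R) / 3 - (2 + 2 * x - y - z - n%:R) / 3
         = (2 + 2 * y - x - z - n%:R) / 3 by field.
by rewrite /Vt (Rt_sig2 ok_x) e //; congr Rt; ring.
Qed.

Lemma Vt_swap23 x y z :
  Rt_defined n ((2 + 2 * x - y - z - n%:R) / 3) -> Vt n x y z = Vt n x z y.
Proof.
move=> ok_x.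
by rewrite /Vt (Rt_sig1 _ ok_x); congr Rt; field.
Qed.

Lemma Vt_symmetric x y z :
  (forall u v w, perm_eq [:: u; v; w] [:: x; y; z] ->
     Rt_defined n ((2 + 2 * u - v - w - n%:R) / 3)) ->
  [/\ Vt n x y z = Vt n y x z,
      Vt n x y z = Vt n x z y,
      Vt n x y z = Vt n z y x,
      Vt n x y z = Vt n y z x
    & Vt n x y z = Vt n z x y].
Proof.
move=> ok.
have [p_xzy p_yxz p_yzx p_zxy p_zyx] :
    [/\ perm_eq [:: x; z; y] [:: x; y; z], perm_eq [:: y; x; z] [:: x; y; z],
        perm_eq [:: y; z; x] [:: x; y; z], perm_eq [:: z; x; y] [:: x; y; z]
      & perm_eq [:: z; y; x] [:: x; y; z]].
  by split; apply/permP => P /=; lia.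
have ok_x := ok _ _ _ (perm_refl [:: x; y; z]).
have swap12_yxz := Vt_swap12 ok_x (ok _ _ _ p_yxz).
have swap23_yxz := Vt_swap23 (ok _ _ _ p_yxz).
split.
- exact: swap12_yxz.
- exact: Vt_swap23.
- by rewrite swap12_yxz swap23_yxz (Vt_swap12 (ok _ _ _ p_yzx) (ok _ _ _ p_zyx)).
- by rewrite swap12_yxz swap23_yxz.
- by rewrite (Vt_swap23 ok_x) (Vt_swap12 (ok _ _ _ p_xzy) (ok _ _ _ p_zxy)).
Qed.

End Invariance.

Local Open Scope complex_scope.

Theorem mainTheorem13 (R : realType) (n : nat) :
  (* (1) the transformation, whenever all expressions are defined *)
  (forall a c : R[i],
     Rt_defined n a -> Rt_defined n (1 + c - a) ->
     poch (1 - a) n * poch a n != 0 ->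
     hypF n [:: - n%:R; a - c - n%:R; c]
            [:: (a - n%:R) / 2; (1 + a - n%:R) / 2] (1/4)
     = poch (1 + c - a) n * poch (a - c) n / (poch (1 - a) n * poch a n)
       * hypF n [:: - n%:R; 1 - a - n%:R; c]
            [:: (1 + c - a - n%:R) / 2; (2 + c - a - n%:R) / 2] (1/4)
     /\ Rt n a c = Rt n (1 + c - a) c)
  (* (2) the group generated by sig1, sig2 is S_3: two involutions whose
         product has order exactly 3 (presentation of the dihedral group D_3 = S_3) *)
  /\ (forall p : R[i] * R[i], sig1 n (sig1 n p) = p)
  /\ (forall p : R[i] * R[i], sig2 n (sig2 n p) = p)
  /\ (forall p : R[i] * R[i],
        sig1 n (sig2 n (sig1 n (sig2 n (sig1 n (sig2 n p))))) = p)
  /\ (exists p : R[i] * R[i], sig1 n (sig2 n p) <> p)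
  (* (3) the six invariances of R~_n, whenever defined *)
  /\ (forall a c : R[i],
        Rt_defined n a -> Rt_defined n (1 + c - a) -> Rt_defined n (1 - c - n%:R) ->
        [/\ Rt n a c = Rt n a (a - c - n%:R),
            Rt n a c = Rt n (1 + c - a) c,
            Rt n a c = Rt n (1 + c - a) (1 - a - n%:R),
            Rt n a c = Rt n (1 - c - n%:R) (a - c - n%:R)
          & Rt n a c = Rt n (1 - c - n%:R) (1 - a - n%:R)])
  (* (4) V~_n is symmetric in x, y, z, whenever defined *)
  /\ (forall x y z : R[i],
        (forall u v w : R[i], perm_eq [:: u; v; w] [:: x; y; z] ->
           Rt_defined n ((2 + 2 * u - v - w - n%:R) / 3)) ->
        [/\ Vt n x y z = Vt n y x z,
            Vt n x y z = Vt n x z y,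
            Vt n x y z = Vt n z y x,
            Vt n x y z = Vt n y z x
          & Vt n x y z = Vt n z x y]).
Proof.
split; first by move=> a c ok_a ok_ca nz; split; [exact: F32_transformation | exact: Rt_sig2].
split; first exact: sig1K.
split; first exact: sig2K.
split; first exact: sig1_sig2_cube.
split; first exact: sig1_sig2_neq_id.
split; first exact: Rt_invariances.
exact: Vt_symmetric.
Qed.
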